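(* For any $n\ge1$, the $\mathbb{S}_n$-module $\mathcal{C}om\mathcal{T}rias(n)$ is isomorphic to the free $k$-module on $\mathcal{C}om\mathcal{T}rias_n=\{e^n_J\mid J\subset[n],\ J\ne\emptyset\}$, where the action of $\mathbb{S}_n$ is induced by the natural action on the subsets $J$ of $[n]$, and the composition of the operad $\mathcal{C}om\mathcal{T}rias$ is given by $$e^k_J\otimes e^{i_1}_{J_1}\otimes\cdots\otimes e^{i_k}_{J_k}\mapsto e^n_{\bar J},\qquad n=i_1+\cdots+i_k,\quad \bar J=\bigcup_{j\in J}\big((i_1+\cdots+i_{j-1})+J_j\big),$$ where $(i_1+\cdots+i_{j-1})+J_j=\{i_1+\cdots+i_{j-1}+a\mid a\in J_j\}$.
   Context: $k$ denotes $\mathbb{Z}$, $\mathbb{Q}$, $\mathbb{F}_p$ or a field of characteristic $0$. A commutative trialgebra is a $k$-module $A$ with two binary operations $*$ and $\bullet$ such that $(x*y)*z=x*(y*z)=x*(z*y)$; $x\bullet y=y\bullet x$ and $(x\bullet y)\bullet z=x\bullet(y\bullet z)$; and $x*(y\bullet z)=x*(y*z)$, $(x\bullet y)*z=x\bullet(y*z)$. $\mathcal{C}om\mathcal{T}rias$ is the (quadratic) operad encoding commutative trialgebras, and $\mathcal{C}om\mathcal{T}rias(n)$ its arity-$n$ component. *)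

From HB Require Import structures.
From mathcomp Require Import all_boot all_order all_fingroup all_algebra.
Set Implicit Arguments. Unset Strict Implicit. Unset Printing Implicit Defensive.
Import Order.TTheory GRing.Theory Num.Theory.
Local Open Scope ring_scope.

(* Terms of the free (symmetric) operad on two binary generators:      *)
(*   Star a b  = a * b   (no symmetry; both orderings are separate)    *)
(* Variables are indexed by nat, 0-based: x_0, ..., x_{n-1}.          *)
Inductive tm : Type :=
| Var of nat
| Star of tm & tm
| Bul of tm & tm.

Definition tm_eq_dec (a b : tm) : {a = b} + {a <> b}.
Proof. decide equality; exact: (fun a b : nat => decP (a =P b)). Defined.

Definition tm_eqb (a b : tm) : bool := if tm_eq_dec a b then true else false.
Lemma tm_eqP : Equality.axiom tm_eqb.
Proof. by move=> a b; rewrite /tm_eqb; case: tm_eq_dec => h; constructor. Qed.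
HB.instance Definition _ := hasDecEq.Build tm tm_eqP.

Fixpoint leaves (t : tm) : seq nat :=
  match t with
  | Var i => [:: i]
  | Star a b => leaves a ++ leaves b
  | Bul a b => leaves a ++ leaves b
  end.

Definition multilinear (n : nat) (t : tm) : bool := perm_eq (leaves t) (iota 0 n).

Fixpoint subst (s : nat -> tm) (t : tm) : tm :=
  match t with
  | Var i => s i
  | Star a b => Star (subst s a) (subst s b)
  | Bul a b => Bul (subst s a) (subst s b)
  end.

Definition shift (o : nat) (t : tm) : tm := subst (fun i => Var (o + i)) t.

(* One-step rewriting by an instance of a defining relation of ComTrias,
   in an arbitrary context.  The operadic ideal in arity n is the k-span of
   the differences  s - s'  with  rstep s s'  (s multilinear in n vars). *)
Inductive rstep : tm -> tm -> Prop :=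
| rs_assoc x y z : rstep (Star (Star x y) z) (Star x (Star y z))
| rs_perm x y z : rstep (Star x (Star y z)) (Star x (Star z y))
| rs_comm x y : rstep (Bul x y) (Bul y x)
| rs_bassoc x y z : rstep (Bul (Bul x y) z) (Bul x (Bul y z))
| rs_mix1 x y z : rstep (Star x (Bul y z)) (Star x (Star y z))
| rs_mix2 x y z : rstep (Star (Bul x y) z) (Bul x (Star y z))
| rs_Sl a a' b : rstep a a' -> rstep (Star a b) (Star a' b)
| rs_Sr a b b' : rstep b b' -> rstep (Star a b) (Star a b')
| rs_Bl a a' b : rstep a a' -> rstep (Bul a b) (Bul a' b)
| rs_Br a b b' : rstep b b' -> rstep (Bul a b) (Bul a b').

(* free k-module on ComTrias_n = { e^n_J | J subset of [n], J nonempty } *)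
Notation nes n := {J : {set 'I_n} | J != set0}.
Notation V k n := {ffun nes n -> k}.

Section Lin.
Variable k : comNzRingType.

Definition lc := seq (k * tm).
Definition coef (c : lc) (t : tm) : k := \sum_(p <- c | p.2 == t) p.1.
Definition lc_multilinear (n : nat) (c : lc) : bool :=
  all (fun p => multilinear n p.2) c.

Definition in_rel (n : nat) (c : lc) : Prop :=
  exists ds : seq (k * (tm * tm)),
    (forall d, d \in ds -> rstep d.2.1 d.2.2 /\ multilinear n d.2.1) /\
    forall t, coef c t = \sum_(d <- ds) d.1 * ((d.2.1 == t)%:R - (d.2.2 == t)%:R).

Definition linext n (phi : tm -> V k n) (c : lc) : V k n :=
  [ffun J => \sum_(p <- c) p.1 * phi p.2 J].

(* S_n action on terms: relabel x_i |-> x_{s i} *)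
Definition relabel n (s : 'S_n) (t : tm) : tm :=
  subst (fun i => Var (odflt i (omap (fun o : 'I_n => val (s o)) (insub i)))) t.

(* S_n action on V k n induced by s . e_J = e_{s(J)} *)
Definition actV n (s : 'S_n) (v : V k n) : V k n :=
  [ffun J' : nes n => \sum_(J : nes n) (if s @: val J == val J' then v J else 0)].

Definition arity m (ar : 'I_m -> nat) : nat := \sum_(j < m) ar j.
Definition off m (ar : 'I_m -> nat) (j : 'I_m) : nat := \sum_(l < m | (l < j)%N) ar l.

Definition compose m (ar : 'I_m -> nat) (t : tm) (ts : 'I_m -> tm) : tm :=
  subst (fun j => match insub j : option 'I_m with
                  | Some o => shift (off ar o) (ts o)
                  | None => Var j end) t.

Definition Jbar m (ar : 'I_m -> nat) (J : nes m)
    (F : {dffun forall j : 'I_m, nes (ar j)}) : {set 'I_(arity ar)} :=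
  [set x : 'I_(arity ar) | [exists j : 'I_m, (j \in val J) &&
      [exists a : 'I_(ar j), (a \in val (F j)) && (val x == off ar j + a)]]].

(* multilinear extension of  e^m_J (x) e_{J_1} (x) ... (x) e_{J_m} |-> e_{Jbar} *)
Definition compV m (ar : 'I_m -> nat) (v : V k m) (ws : forall j : 'I_m, V k (ar j))
    : V k (arity ar) :=
  [ffun J' : nes (arity ar) => \sum_(J : nes m)
     \sum_(F : {dffun forall j : 'I_m, nes (ar j)})
       (if Jbar J F == val J' then v J * \prod_(j < m) ws j (F j) else 0)].

End Lin.

Definition admissible (k : comNzRingType) : Prop :=
  (exists f : {rmorphism int -> k}, bijective f) \/
  (exists f : {rmorphism rat -> k}, bijective f) \/
  (exists p : nat, prime p /\ exists f : {rmorphism 'F_p -> k}, bijective f) \/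
  ((forall x : k, x != 0 -> exists y : k, y * x = 1) /\
   (forall n : nat, n.+1%:R != 0 :> k)).

From HB Require Import structures.
From mathcomp Require Import all_boot all_order all_fingroup all_algebra.
From Stdlib Require Import Relations Setoid Morphisms.
Set Implicit Arguments. Unset Strict Implicit. Unset Printing Implicit Defensive.
Import Order.TTheory GRing.Theory Num.Theory.

(* A monomial in [*] and [•] has visible variables: those not lying in the right
   argument of some [*].  The defining relations preserve the set J of visible
   variables.  Conversely they rewrite every multilinear monomial into the normal form
   ((x_j1 • ... • x_jr) * x_h1) * ... * x_hs, with the j's enumerating J and the h's
   the other variables: below a right argument of [*] everything becomes a left
   [*]-comb (by x*(y•z) = x*(y*z) and associativity), whose variables commute
   (x*(y*z) = x*(z*y)), and a [•]-product absorbs [*]-combs on either side through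
   (x•y)*z = x•(y*z).  So t |-> e_J identifies ComTrias(n) with the free module on the
   nonempty J, and relabelling and substitution act on visible sets as in the
   statement. *)

Fixpoint visible (t : tm) : seq nat :=
  match t with
  | Var i => [:: i]
  | Star a _ => visible a
  | Bul a b => visible a ++ visible b
  end.

Fixpoint hidden (t : tm) : seq nat :=
  match t with
  | Var _ => [::]
  | Star a b => hidden a ++ leaves b
  | Bul a b => hidden a ++ hidden b
  end.

Lemma perm_leaves_visible t : perm_eq (leaves t) (visible t ++ hidden t).
Proof.
elim: t => [i|a iha b ihb|a iha b ihb] //=; first by rewrite catA perm_cat2r.
by rewrite (permPl (perm_cat iha ihb)) perm_catACA.
Qed.

Lemma visible_neq_nil t : visible t != [::].
Proof. by elim: t => //= a iha b _; case: (visible a) iha. Qed.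

Notation eqv := (clos_refl_sym_trans tm rstep).

#[local] Instance eqv_equiv : Equivalence eqv.
Proof. by split; [exact: rst_refl | exact: rst_sym | exact: rst_trans]. Qed.

#[local] Hint Resolve rst_refl : core.

Lemma eqv_congr (f : tm -> tm) :
  (forall a b, rstep a b -> rstep (f a) (f b)) -> forall a b, eqv a b -> eqv (f a) (f b).
Proof.
move=> hf a b; elim=> [x y /hf|x|x y _ ih|x y z _ ih1 _ ih2]; first exact: rst_step.
- by [].
- by symmetry.
- by rewrite ih1 ih2.
Qed.

#[local] Instance Star_eqv : Proper (eqv ==> eqv ==> eqv) Star.
Proof.
move=> a a' ha b b' hb; transitivity (Star a' b).
  exact: (eqv_congr (f := Star^~ b) (fun _ _ => @rs_Sl _ _ b)).
exact: (eqv_congr (f := Star a') (@rs_Sr a')).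
Qed.

#[local] Instance Bul_eqv : Proper (eqv ==> eqv ==> eqv) Bul.
Proof.
move=> a a' ha b b' hb; transitivity (Bul a' b).
  exact: (eqv_congr (f := Bul^~ b) (fun _ _ => @rs_Bl _ _ b)).
exact: (eqv_congr (f := Bul a') (@rs_Br a')).
Qed.

Lemma rstep_eqv a b : rstep a b -> eqv a b.
Proof. exact: rst_step. Qed.

Lemma rstep_perm_leaves a b : rstep a b -> perm_eq (leaves a) (leaves b).
Proof.
elim=> /= [x y z|x y z|x y|x y z|x y z|x y z|x x' y _ h|x y y' _ h|x x' y _ h|x y y' _ h].
- by rewrite catA.
- by rewrite perm_cat2l perm_catC.
- by rewrite perm_catC.
- by rewrite catA.
- by [].
- by rewrite catA.
- by rewrite perm_cat2r.
- by rewrite perm_cat2l.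
- by rewrite perm_cat2r.
- by rewrite perm_cat2l.
Qed.

Lemma eqv_perm_leaves a b : eqv a b -> perm_eq (leaves a) (leaves b).
Proof.
elim=> [x y /rstep_perm_leaves|x|x y _|x y z _ h1 _] //; first by rewrite perm_sym.
exact: perm_trans h1.
Qed.

Lemma eqv_multilinear n a b : eqv a b -> multilinear n a = multilinear n b.
Proof. by move=> /eqv_perm_leaves h; rewrite /multilinear (permPl h). Qed.

Lemma rstep_visible a b : rstep a b -> visible a =i visible b.
Proof.
elim=> //= [x y|x y z|x x' y _ h|x y y' _ h] i.
- by rewrite !mem_cat orbC.
- by rewrite catA.
- by rewrite !mem_cat h.
- by rewrite !mem_cat h.
Qed.

Definition visible_set n (t : tm) : {set 'I_n} := [set i : 'I_n | val i \in visible t].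

Lemma rstep_visible_set n a b : rstep a b -> visible_set n a = visible_set n b.
Proof. by move=> h; apply/setP => i; rewrite !inE (rstep_visible h). Qed.

Section FoldVars.
Variable op : tm -> tm -> tm.
Hypothesis op_eqv : Proper (eqv ==> eqv ==> eqv) op.
Hypothesis op_swap :
  forall x a b, eqv (op (op x (Var a)) (Var b)) (op (op x (Var b)) (Var a)).

Definition fold_vars (x : tm) (l : seq nat) : tm := foldl (fun y i => op y (Var i)) x l.

Lemma fold_vars_rcons x l i : fold_vars x (rcons l i) = op (fold_vars x l) (Var i).
Proof. exact: foldl_rcons. Qed.

Lemma fold_vars_cat x l1 l2 : fold_vars x (l1 ++ l2) = fold_vars (fold_vars x l1) l2.
Proof. exact: foldl_cat. Qed.

Lemma fold_vars_eqv : Proper (eqv ==> eq ==> eqv) fold_vars.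
Proof.
move=> x x' hx l _ <-; elim: l x x' hx => //= i l IHl x x' hx.
by apply: IHl; rewrite hx.
Qed.

#[local] Existing Instance fold_vars_eqv.

Lemma fold_vars_cons_rcons x i l :
  eqv (fold_vars x (i :: l)) (fold_vars x (rcons l i)).
Proof.
elim: l x => // j l IHl x.
change (eqv (fold_vars (op (op x (Var i)) (Var j)) l) (fold_vars (op x (Var j)) (rcons l i))).
by rewrite op_swap; apply: IHl.
Qed.

Lemma fold_vars_perm x l l' : perm_eq l l' -> eqv (fold_vars x l) (fold_vars x l').
Proof.
elim: l x l' => [|i l IHl] x l' hl; first by move: hl; rewrite perm_sym => /perm_nilP ->.
have il' : i \in l' by rewrite -(perm_mem hl) mem_head.
move: hl; case/splitPr: il' => l1 l2.
rewrite -[i :: l2]cat1s perm_sym perm_catCA perm_sym perm_cons => /(IHl (op x (Var i))) hl.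
apply: rst_trans hl _.
rewrite -cat_rcons !fold_vars_cat -[fold_vars (op x (Var i)) l1]/(fold_vars x (i :: l1)).
by rewrite fold_vars_cons_rcons.
Qed.

End FoldVars.

Lemma star_swap x a b :
  eqv (Star (Star x (Var a)) (Var b)) (Star (Star x (Var b)) (Var a)).
Proof. by rewrite !(rstep_eqv (rs_assoc _ _ _)) (rstep_eqv (rs_perm _ _ _)). Qed.

Lemma bul_swap x a b :
  eqv (Bul (Bul x (Var a)) (Var b)) (Bul (Bul x (Var b)) (Var a)).
Proof.
by rewrite !(rstep_eqv (rs_bassoc _ _ _)) (rstep_eqv (rs_comm (Var a) (Var b))).
Qed.

Notation star_fold := (fold_vars Star).
Notation bul_fold := (fold_vars Bul).

#[local] Instance star_fold_eqv : Proper (eqv ==> eq ==> eqv) star_fold.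
Proof. exact: fold_vars_eqv. Qed.

#[local] Instance bul_fold_eqv : Proper (eqv ==> eq ==> eqv) bul_fold.
Proof. exact: fold_vars_eqv. Qed.

Lemma star_fold_perm x l l' : perm_eq l l' -> eqv (star_fold x l) (star_fold x l').
Proof. exact: fold_vars_perm star_swap x l l'. Qed.

Lemma bul_fold_perm x l l' : perm_eq l l' -> eqv (bul_fold x l) (bul_fold x l').
Proof. exact: fold_vars_perm bul_swap x l l'. Qed.

(* [Var 0] is a junk value: only nonempty words occur. *)
Definition bul_word (l : seq nat) : tm :=
  if l is i :: l' then bul_fold (Var i) l' else Var 0.

Lemma bul_word_cat_cons l1 i l2 :
  eqv (bul_word (l1 ++ i :: l2)) (bul_word (i :: l1 ++ l2)).
Proof.
case: l1 => [|j l1] //=.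
rewrite (@bul_fold_perm _ _ (i :: l1 ++ l2)) /=; last by rewrite -[i :: l2]cat1s perm_catCA.
by rewrite (rstep_eqv (rs_comm (Var j) (Var i))).
Qed.

Lemma bul_word_perm l l' : perm_eq l l' -> eqv (bul_word l) (bul_word l').
Proof.
case: l => [|i l] hl; first by move: hl; rewrite perm_sym => /perm_nilP ->.
have il' : i \in l' by rewrite -(perm_mem hl) mem_head.
move: hl; case/splitPr: il' => l1 l2 hl.
rewrite bul_word_cat_cons /=; apply: bul_fold_perm.
by move: hl; rewrite perm_sym -[i :: l2]cat1s perm_catCA perm_cons perm_sym.
Qed.

Lemma star_eqv_fold_leaves y b : eqv (Star y b) (star_fold y (leaves b)).
Proof.
elim: b y => [i|c IHc d IHd|c IHc d IHd] y //=.
  by rewrite -(rstep_eqv (rs_assoc _ _ _)) IHd IHc fold_vars_cat.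
by rewrite (rstep_eqv (rs_mix1 _ _ _)) -(rstep_eqv (rs_assoc _ _ _)) IHd IHc fold_vars_cat.
Qed.

Lemma bul_star_fold x y l : eqv (Bul x (star_fold y l)) (star_fold (Bul x y) l).
Proof.
elim/last_ind: l => // l i IHl.
by rewrite !fold_vars_rcons -(rstep_eqv (rs_mix2 _ _ _)) IHl.
Qed.

Lemma star_fold_bul x y l : eqv (Bul (star_fold x l) y) (star_fold (Bul x y) l).
Proof.
by rewrite (rstep_eqv (rs_comm _ _)) bul_star_fold (rstep_eqv (rs_comm y x)).
Qed.

Lemma bul_bul_fold x y l : eqv (Bul x (bul_fold y l)) (bul_fold (Bul x y) l).
Proof.
elim/last_ind: l => // l i IHl.
by rewrite !fold_vars_rcons -(rstep_eqv (rs_bassoc _ _ _)) IHl.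
Qed.

Lemma bul_word_cat l1 l2 : l1 != [::] -> l2 != [::] ->
  eqv (Bul (bul_word l1) (bul_word l2)) (bul_word (l1 ++ l2)).
Proof.
case: l1 => // i l1 _; case: l2 => // j l2 _ /=.
by rewrite bul_bul_fold fold_vars_cat.
Qed.

Lemma eqv_visible_hidden t : eqv t (star_fold (bul_word (visible t)) (hidden t)).
Proof.
elim: t => [i|a IHa b _|a IHa b IHb] //=.
  by rewrite {1}IHa star_eqv_fold_leaves fold_vars_cat.
rewrite {1}IHa {1}IHb star_fold_bul bul_star_fold -fold_vars_cat.
rewrite (@star_fold_perm _ _ (hidden a ++ hidden b)); last by rewrite perm_catC.
by rewrite bul_word_cat ?visible_neq_nil.
Qed.

Definition seq_of_set n (J : {set 'I_n}) : seq nat := [seq val x | x <- enum J].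

Definition normal_form n (J : {set 'I_n}) : tm :=
  star_fold (bul_word (seq_of_set J)) (seq_of_set (~: J)).

Lemma uniq_seq_of_set n (J : {set 'I_n}) : uniq (seq_of_set J).
Proof. by rewrite map_inj_uniq ?enum_uniq //; exact: val_inj. Qed.

Lemma mem_seq_of_set n (J : {set 'I_n}) (x : 'I_n) : (val x \in seq_of_set J) = (x \in J).
Proof. by rewrite (mem_map val_inj) mem_enum. Qed.

Lemma seq_of_set_lt n (J : {set 'I_n}) i : i \in seq_of_set J -> i < n.
Proof. by rewrite /seq_of_set => /mapP [x _ ->]; exact: ltn_ord. Qed.

Lemma seq_of_set_neq_nil n (J : {set 'I_n}) : J != set0 -> seq_of_set J != [::].
Proof. by case/set0Pn=> x xJ; apply: contraTneq xJ => eJ; rewrite -mem_seq_of_set eJ. Qed.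

Lemma perm_seq_of_set n (J : {set 'I_n}) (s : seq nat) : uniq s ->
  (forall i, i \in s -> i < n) -> (forall x : 'I_n, (val x \in s) = (x \in J)) ->
  perm_eq s (seq_of_set J).
Proof.
move=> us s_lt sJ; apply: uniq_perm => // [|i]; first exact: uniq_seq_of_set.
apply/idP/idP => i_in.
  have lt_in := s_lt i i_in.
  by move: i_in; rewrite -[i]/(val (Ordinal lt_in)) sJ mem_seq_of_set.
have lt_in := seq_of_set_lt i_in.
by move: i_in; rewrite -[i]/(val (Ordinal lt_in)) sJ mem_seq_of_set.
Qed.

Lemma perm_seq_of_setC n (J : {set 'I_n}) :
  perm_eq (seq_of_set J ++ seq_of_set (~: J)) (iota 0 n).
Proof.
rewrite -map_cat -val_enum_ord perm_map // enumT /enum_mem.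
rewrite perm_sym -(perm_filterC (mem J)) perm_sym perm_cat2l.
by rewrite (eq_filter (a2 := predC (mem J))) // => x; rewrite !inE.
Qed.

Section Multilinear.
Variables (n : nat) (t : tm).
Hypothesis t_ml : multilinear n t.

Lemma multilinear_lt i : i \in leaves t -> i < n.
Proof. by rewrite (perm_mem t_ml) mem_iota. Qed.

Lemma mem_visible_leaves i : i \in visible t -> i \in leaves t.
Proof. by rewrite (perm_mem (perm_leaves_visible t)) mem_cat => ->. Qed.

Lemma mem_hidden_leaves i : i \in hidden t -> i \in leaves t.
Proof. by rewrite (perm_mem (perm_leaves_visible t)) mem_cat orbC => ->. Qed.

Lemma multilinear_uniq : uniq (visible t ++ hidden t).
Proof. by rewrite -(perm_uniq (perm_leaves_visible t)) (perm_uniq t_ml) iota_uniq. Qed.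

Lemma mem_hidden (x : 'I_n) : (val x \in hidden t) = (val x \notin visible t).
Proof.
have := multilinear_uniq; rewrite cat_uniq => /and3P [_ /hasPn disj _].
have : val x \in leaves t by rewrite (perm_mem t_ml) mem_iota /=.
rewrite (perm_mem (perm_leaves_visible t)) mem_cat.
case/orP=> x_in; last by rewrite x_in (disj _ x_in).
by rewrite x_in; apply/negbTE/negP => /disj; rewrite x_in.
Qed.

Lemma visible_set_neq0 : visible_set n t != set0.
Proof.
have := visible_neq_nil t; case e: (visible t) => [|i l] // _.
have i_vis : i \in visible t by rewrite e mem_head.
have lt_in := multilinear_lt (mem_visible_leaves i_vis).
by apply/set0Pn; exists (Ordinal lt_in); rewrite inE.
Qed.

Lemma perm_visible : perm_eq (visible t) (seq_of_set (visible_set n t)).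
Proof.
apply: perm_seq_of_set => [|i /mem_visible_leaves /multilinear_lt //|x]; last by rewrite inE.
by have := multilinear_uniq; rewrite cat_uniq => /andP [].
Qed.

Lemma perm_hidden : perm_eq (hidden t) (seq_of_set (~: visible_set n t)).
Proof.
apply: perm_seq_of_set => [|i /mem_hidden_leaves /multilinear_lt //|x].
  by have := multilinear_uniq; rewrite cat_uniq => /and3P [].
by rewrite mem_hidden !inE.
Qed.

Lemma eqv_normal_form : eqv t (normal_form (visible_set n t)).
Proof.
rewrite {1}(eqv_visible_hidden t) (bul_word_perm perm_visible).
by rewrite (star_fold_perm _ perm_hidden).
Qed.

End Multilinear.

Lemma visible_star_fold x l : visible (star_fold x l) = visible x.
Proof. by elim: l x => //= i l IHl x; rewrite IHl. Qed.

Lemma leaves_fold_vars op x l :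
  (forall a b, leaves (op a b) = leaves a ++ leaves b) ->
  leaves (fold_vars op x l) = leaves x ++ l.
Proof.
by move=> op_leaves; elim: l x => [|i l IHl] x /=; rewrite ?cats0 // IHl op_leaves -catA.
Qed.

Lemma visible_bul_fold x l : visible (bul_fold x l) = visible x ++ l.
Proof. by elim: l x => [|i l IHl] x /=; rewrite ?cats0 // IHl -catA. Qed.

Section NormalForm.
Variables (n : nat) (J : {set 'I_n}).
Hypothesis J_neq0 : J != set0.

Lemma seq_of_set_cons : exists i l, seq_of_set J = i :: l.
Proof. by case: (seq_of_set J) (seq_of_set_neq_nil J_neq0) => // i l; exists i, l. Qed.

Lemma visible_normal_form : visible (normal_form J) = seq_of_set J.
Proof.
have [i [l eJ]] := seq_of_set_cons.
by rewrite /normal_form visible_star_fold eJ visible_bul_fold.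
Qed.

Lemma leaves_normal_form : leaves (normal_form J) = seq_of_set J ++ seq_of_set (~: J).
Proof.
have [i [l eJ]] := seq_of_set_cons.
by rewrite /normal_form leaves_fold_vars // eJ /= leaves_fold_vars.
Qed.

Lemma normal_form_multilinear : multilinear n (normal_form J).
Proof. by rewrite /multilinear leaves_normal_form perm_seq_of_setC. Qed.

Lemma visible_set_normal_form : visible_set n (normal_form J) = J.
Proof. by apply/setP => x; rewrite inE visible_normal_form mem_seq_of_set. Qed.

End NormalForm.

Lemma visible_subst s t : visible (subst s t) = flatten [seq visible (s i) | i <- visible t].
Proof.
elim: t => [i|a IHa b _|a IHa b IHb] //=; first by rewrite cats0.
by rewrite IHa IHb map_cat flatten_cat.
Qed.

Lemma visible_set_relabel n (s : 'S_n) t : multilinear n t ->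
  visible_set n (relabel s t) = s @: visible_set n t.
Proof.
move=> t_ml; apply/setP => x; rewrite inE visible_subst /= flatten_map1.
apply/mapP/imsetP => [[i i_vis x_eq]|[y y_vis ->]].
  have lt_in := multilinear_lt t_ml (mem_visible_leaves i_vis).
  exists (Ordinal lt_in); first by rewrite inE.
  by apply: val_inj => /=; rewrite x_eq -[i]/(val (Ordinal lt_in)) valK.
by rewrite inE in y_vis; exists (val y); rewrite ?valK.
Qed.

Lemma visible_set_compose m (ar : 'I_m -> nat) t ts (J : nes m)
    (F : {dffun forall j : 'I_m, nes (ar j)}) :
  multilinear m t -> (forall j, multilinear (ar j) (ts j)) ->
  val J = visible_set m t -> (forall j, val (F j) = visible_set (ar j) (ts j)) ->
  Jbar J F = visible_set (arity ar) (compose ar t ts).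
Proof.
move=> t_ml ts_ml eJ eF; apply/setP => x; rewrite !inE visible_subst.
apply/existsP/flattenP => [[j /andP [j_J /existsP [a /andP [a_F /eqP x_eq]]]]|].
  rewrite eJ inE in j_J; rewrite eF inE in a_F.
  exists (visible (shift (off ar j) (ts j))).
    by apply/mapP; exists (val j); rewrite ?valK.
  by rewrite visible_subst flatten_map1 x_eq; apply: map_f.
case=> _ /mapP [i i_vis ->].
have lt_im := multilinear_lt t_ml (mem_visible_leaves i_vis).
rewrite -[i]/(val (Ordinal lt_im)) valK visible_subst flatten_map1 => /mapP [a a_vis x_eq].
have lt_a := multilinear_lt (ts_ml _) (mem_visible_leaves a_vis).
exists (Ordinal lt_im); rewrite eJ inE i_vis /=.
by apply/existsP; exists (Ordinal lt_a); rewrite eF inE a_vis x_eq /=.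
Qed.

Local Open Scope ring_scope.

Section LinearCombinations.
Variable k : comNzRingType.

Lemma coefE (c : lc k) t : coef c t = \sum_(p <- c) p.1 * (p.2 == t)%:R.
Proof.
by rewrite /coef big_mkcond; apply: eq_bigr => p _; case: eqP; rewrite ?mulr1 ?mulr0.
Qed.

Lemma sum_seq_pred1 (S : seq tm) x (f : tm -> k) : uniq S -> x \in S ->
  \sum_(t <- S) (x == t)%:R * f t = f x.
Proof.
move=> uS xS; rewrite (bigD1_seq x) //= eqxx mul1r big1 ?addr0 // => t.
by rewrite eq_sym => /negbTE ->; rewrite mul0r.
Qed.

Lemma sum_pred1 (I : finType) (i0 : I) (g : I -> k) : \sum_i (i == i0)%:R * g i = g i0.
Proof.
rewrite (bigD1 i0) //= eqxx mul1r big1 ?addr0 // => i /negbTE ->.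
by rewrite mul0r.
Qed.

Lemma sum_nes_pred1 n (X : {set 'I_n}) (X_neq0 : X != set0) (g : nes n -> k) :
  \sum_(J : nes n) (val J == X)%:R * g J = g (exist _ X X_neq0).
Proof. by rewrite -sum_pred1; apply: eq_bigr => J _; rewrite -val_eqE. Qed.

Lemma prodr_natr_bool (I : finType) (b : pred I) :
  \prod_(i : I) (b i)%:R = [forall i, b i]%:R :> k.
Proof.
case: forallP => [b_all|not_all]; first by rewrite big1 // => i _; rewrite b_all.
have /existsP [i /negbTE b_i] : [exists i, ~~ b i] by rewrite -negb_forall; apply/forallP.
by rewrite (bigD1 i) //= b_i mul0r.
Qed.

Lemma sum_lc_coef (c : lc k) (S : seq tm) (f : tm -> k) :
  uniq S -> {subset [seq p.2 | p <- c] <= S} ->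
  \sum_(p <- c) p.1 * f p.2 = \sum_(t <- S) coef c t * f t.
Proof.
move=> uS cS; under [RHS]eq_bigr do rewrite coefE mulr_suml.
rewrite exchange_big /=; apply: eq_big_seq => p p_c.
rewrite -(sum_seq_pred1 f uS (cS _ (map_f _ p_c))) mulr_sumr.
by apply: eq_bigr => t _; rewrite mulrA.
Qed.

Lemma sum_lc_rel (c : lc k) (ds : seq (k * (tm * tm))) (f : tm -> k) :
  (forall t, coef c t = \sum_(d <- ds) d.1 * ((d.2.1 == t)%:R - (d.2.2 == t)%:R)) ->
  \sum_(p <- c) p.1 * f p.2 = \sum_(d <- ds) d.1 * (f d.2.1 - f d.2.2).
Proof.
move=> c_ds.
set S := undup ([seq p.2 | p <- c] ++ [seq d.2.1 | d <- ds] ++ [seq d.2.2 | d <- ds]).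
have uS : uniq S := undup_uniq _.
rewrite (@sum_lc_coef _ S) => [|//|t t_c]; last by rewrite mem_undup mem_cat t_c.
under eq_bigr do rewrite c_ds mulr_suml.
rewrite exchange_big /=; apply: eq_big_seq => d d_ds.
have a_S : d.2.1 \in S by rewrite mem_undup !mem_cat (map_f _ d_ds) ?orbT.
have b_S : d.2.2 \in S by rewrite mem_undup !mem_cat (map_f _ d_ds) ?orbT.
rewrite -(sum_seq_pred1 f uS a_S) -(sum_seq_pred1 f uS b_S).
rewrite -sumrB mulr_sumr; apply: eq_bigr => t _.
by rewrite mulrBr mulrBl mulrBr !mulrA.
Qed.

End LinearCombinations.

Section RelationSpan.
Variables (k : comNzRingType) (n : nat).

(* [in_rel n c] unfolds to [rel_span n (coef c)]. *)
Definition rel_span (f : tm -> k) : Prop :=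
  exists ds : seq (k * (tm * tm)),
    (forall d, d \in ds -> rstep d.2.1 d.2.2 /\ multilinear n d.2.1) /\
    forall t, f t = \sum_(d <- ds) d.1 * ((d.2.1 == t)%:R - (d.2.2 == t)%:R).

Lemma rel_span_ext f g : f =1 g -> rel_span f -> rel_span g.
Proof. by move=> fg [ds [ds_rel f_ds]]; exists ds; split=> // t; rewrite -fg. Qed.

Lemma rel_span0 : rel_span (fun=> 0).
Proof. by exists [::]; split=> // t; rewrite big_nil. Qed.

Lemma rel_spanD f g : rel_span f -> rel_span g -> rel_span (fun t => f t + g t).
Proof.
move=> [ds1 [ds1_rel f_ds1]] [ds2 [ds2_rel g_ds2]]; exists (ds1 ++ ds2); split.
  by move=> d; rewrite mem_cat => /orP [/ds1_rel|/ds2_rel].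
by move=> t; rewrite big_cat f_ds1 g_ds2.
Qed.

Lemma rel_spanZ a f : rel_span f -> rel_span (fun t => a * f t).
Proof.
move=> [ds [ds_rel f_ds]]; exists [seq (a * d.1, d.2) | d <- ds]; split.
  by move=> d /mapP [d' /ds_rel ? ->].
by move=> t; rewrite big_map f_ds mulr_sumr; apply: eq_bigr => d _; rewrite mulrA.
Qed.

Lemma rel_span_sum (T : eqType) (s : seq T) (F : T -> tm -> k) :
  (forall x, x \in s -> rel_span (F x)) -> rel_span (fun t => \sum_(x <- s) F x t).
Proof.
elim: s => [|x s IHs] sF; first by apply: rel_span_ext rel_span0 => t; rewrite big_nil.
apply: rel_span_ext (rel_spanD (sF x (mem_head _ _)) (IHs _)) => [t|y y_s].
  by rewrite big_cons.
by apply: sF; rewrite inE y_s orbT.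
Qed.

Lemma rel_span_eqv a b : eqv a b -> multilinear n a ->
  rel_span (fun t => (a == t)%:R - (b == t)%:R).
Proof.
elim=> [x y xy|x|x y xy IH|x y z xy IHxy _ IHyz] x_ml.
- exists [:: (1, (x, y))]; split=> [d|t]; last by rewrite big_seq1 mul1r.
  by rewrite inE => /eqP ->.
- by apply: rel_span_ext rel_span0 => t; rewrite subrr.
- rewrite -(eqv_multilinear n xy) in x_ml.
  by apply: rel_span_ext (rel_spanZ (-1) (IH x_ml)) => t; rewrite mulN1r opprB.
- have y_ml : multilinear n y by rewrite -(eqv_multilinear n xy).
  by apply: rel_span_ext (rel_spanD (IHxy x_ml) (IHyz y_ml)) => t; rewrite addrA subrK.
Qed.

End RelationSpan.

Section Basis.
Variable k : comNzRingType.

Definition tm_basis n (t : tm) : V k n := [ffun J => (val J == visible_set n t)%:R].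

Lemma linext_tm_basis n (c : lc k) J :
  linext (tm_basis n) c J = \sum_(p <- c) p.1 * (val J == visible_set n p.2)%:R.
Proof. by rewrite ffunE; under eq_bigr do rewrite ffunE. Qed.

Lemma linext_tm_basis_rel n (c : lc k) : in_rel n c -> linext (tm_basis n) c = 0.
Proof.
move=> [ds [ds_rel c_ds]]; apply/ffunP => J.
rewrite !ffunE (sum_lc_rel (fun t => tm_basis n t J) c_ds) big_seq big1 //.
move=> d /ds_rel [d_rel _].
by rewrite !ffunE (rstep_visible_set n d_rel) subrr mulr0.
Qed.

Lemma sum_lc_normal_form n (c : lc k) t : lc_multilinear n c ->
  \sum_(p <- c) p.1 * (normal_form (visible_set n p.2) == t)%:R =
  \sum_(J : nes n) linext (tm_basis n) c J * (normal_form (val J) == t)%:R.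
Proof.
move=> /allP c_ml; under [RHS]eq_bigr do rewrite linext_tm_basis mulr_suml.
rewrite exchange_big /=; apply: eq_big_seq => p p_c.
have vis_neq0 := visible_set_neq0 (c_ml p p_c).
rewrite -(sum_nes_pred1 vis_neq0 (fun J => (normal_form (val J) == t)%:R)) mulr_sumr.
by apply: eq_bigr => J _; rewrite mulrA.
Qed.

Lemma in_rel_linext_tm_basis n (c : lc k) :
  lc_multilinear n c -> linext (tm_basis n) c = 0 -> in_rel n c.
Proof.
move=> c_ml c0; have /allP c_ml' := c_ml.
have: rel_span n (fun t => \sum_(p <- c) p.1 *
    ((p.2 == t)%:R - (normal_form (visible_set n p.2) == t)%:R)).
  apply: rel_span_sum => p p_c; apply: rel_spanZ.
  exact: rel_span_eqv (eqv_normal_form (c_ml' p p_c)) (c_ml' p p_c).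
apply: rel_span_ext => t; under eq_bigr do rewrite mulrBr.
rewrite coefE sumrB (sum_lc_normal_form t c_ml) [X in _ - X]big1 ?subr0 // => J _.
by rewrite c0 ffunE mul0r.
Qed.

Definition lc_of_vector n (v : V k n) : lc k := [seq (v J, normal_form (val J)) | J : nes n].

Lemma lc_of_vector_multilinear n (v : V k n) : lc_multilinear n (lc_of_vector v).
Proof. by apply/allP => _ /mapP [J _ ->]; exact: normal_form_multilinear (valP J). Qed.

Lemma linext_lc_of_vector n (v : V k n) : linext (tm_basis n) (lc_of_vector v) = v.
Proof.
apply/ffunP => J'; rewrite linext_tm_basis big_map big_enum /=.
rewrite -[RHS](sum_pred1 J'); apply: eq_big => // J _.
by rewrite visible_set_normal_form ?(valP J) // val_eqE eq_sym mulrC.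
Qed.

Lemma tm_basis_relabel n (s : 'S_n) t : multilinear n t ->
  tm_basis n (relabel s t) = actV s (tm_basis n t).
Proof.
move=> t_ml; apply/ffunP => J'; rewrite !ffunE visible_set_relabel //.
rewrite eq_sym -(sum_nes_pred1 (visible_set_neq0 t_ml) (fun J => (s @: val J == val J')%:R)).
by apply: eq_bigr => J _; rewrite ffunE; case: (_ @: _ == _); rewrite ?mulr1 ?mulr0.
Qed.

Lemma tm_basis_compose m (ar : 'I_m -> nat) t ts :
  multilinear m t -> (forall j, multilinear (ar j) (ts j)) ->
  tm_basis (arity ar) (compose ar t ts) =
    compV (tm_basis m t) (fun j => tm_basis (ar j) (ts j)).
Proof.
move=> t_ml ts_ml; apply/ffunP => J'; rewrite !ffunE.
pose F0 : {dffun forall j : 'I_m, nes (ar j)} :=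
  [ffun j => exist _ (visible_set (ar j) (ts j)) (visible_set_neq0 (ts_ml j))].
have prod_F (F : {dffun forall j : 'I_m, nes (ar j)}) :
    \prod_j tm_basis (ar j) (ts j) (F j) = (F == F0)%:R.
  rewrite (eq_bigr (fun j => (F j == F0 j)%:R)) => [|j _]; last by rewrite !ffunE -val_eqE.
  rewrite prodr_natr_bool; congr (_%:R); congr nat_of_bool.
  by apply/forallP/eqP => [F_F0|-> //]; apply/ffunP => j; apply/eqP.
transitivity (\sum_(J : nes m) (val J == visible_set m t)%:R *
    \sum_(F : {dffun forall j : 'I_m, nes (ar j)}) (F == F0)%:R * (Jbar J F == val J')%:R : k).
  rewrite (sum_nes_pred1 (visible_set_neq0 t_ml)) sum_pred1 eq_sym.
  by rewrite (visible_set_compose t_ml ts_ml) // => j; rewrite ffunE.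
apply: eq_bigr => J _; rewrite mulr_sumr; apply: eq_bigr => F _.
by rewrite prod_F ffunE; case: (Jbar J F == val J'); rewrite ?mulr1 ?mulr0 ?mulrA.
Qed.

End Basis.

Theorem mainTheorem6 (k : comNzRingType) (hk : admissible k) :
  exists phi : forall n : nat, tm -> V k n,
    (forall n : nat, (0 < n)%N ->
       (* well defined on ComTrias(n) = multilinear terms / relations *)
       (forall c : lc k, lc_multilinear n c -> in_rel n c -> linext (phi n) c = 0) /\
       (* injective *)
       (forall c : lc k, lc_multilinear n c -> linext (phi n) c = 0 -> in_rel n c) /\
       (* surjective *)
       (forall v : V k n, exists c : lc k, lc_multilinear n c /\ linext (phi n) c = v) /\
       (* S_n-equivariant *)
       (forall (s : 'S_n) (t : tm), multilinear n t ->
          phi n (relabel s t) = actV s (phi n t))) /\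
    (* composition *)
    (forall (m : nat) (ar : 'I_m -> nat) (t : tm) (ts : 'I_m -> tm),
       (0 < m)%N -> (forall j, 0 < ar j)%N ->
       multilinear m t -> (forall j, multilinear (ar j) (ts j)) ->
       phi (arity ar) (compose ar t ts) =
         compV (phi m t) (fun j : 'I_m => phi (ar j) (ts j))).
Proof.
exists (@tm_basis k); split=> [n _|m ar t ts _ _]; last exact: tm_basis_compose.
split; first by move=> c _; exact: linext_tm_basis_rel.
split; first exact: in_rel_linext_tm_basis.
split; last exact: tm_basis_relabel.
move=> v; exists (lc_of_vector v).
by split; [exact: lc_of_vector_multilinear | exact: linext_lc_of_vector].
Qed.
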